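(* Let $A$ be $\mathbb{Z}$ or $\mathbb{Z}/n\mathbb{Z}$ for an integer $n\geq 2$, and $H_A=H_1(\Sigma_2;A)$, identified with $A^4$ via the basis $x_1,x_2,y_1,y_2$, with $v_i$ denoting the $i$-th coordinate of $v\in H_A$. Let $\alpha,\beta,\gamma,\delta$ be the generators of the genus-$2$ Goeritz group $\mathcal{E}_2$ described in the context. Then \[ H^1(\mathcal{E}_2;H_A)\cong \{d \in Z^{1}(\mathcal{E}_2;H_A) \;:\; d(\delta)_1 - d(\alpha)_1 = d(\gamma)_2 - d(\beta)_2 = d(\gamma)_3 - d(\alpha)_3 = d(\beta)_4 - d(\delta)_4 = 0 \}. \]
   Context: Let $S^3=H_2\cup H_2^*$ be a genus-$2$ Heegaard splitting with Heegaard surface $\Sigma_2=\partial H_2$. The genus-$2$ Goeritz group $\mathcal{E}_2$ is the group of isotopy classes $[f]$ of orientation-preserving homeomorphisms of $\Sigma_2$ for which there is an orientation-preserving self-homeomorphism $F$ of $S^3$ with $F(H_2)=H_2$ and $[F|_{\Sigma_2}]=[f]$; it acts on $H_A$ by induced maps. Fix a basis $x_1,x_2,y_1,y_2$ of $H_1(\Sigma_2;\mathbb{Z})$ (inducing one of $H_A$). $\mathcal{E}_2$ is generated by four elements $\alpha,\beta,\gamma,\delta$ acting as follows: $\alpha_*(x_i)=-x_i$, $\alpha_*(y_i)=-y_i$ ($i=1,2$); $\beta_*(x_1)=x_1$, $\beta_*(x_2)=-x_2$, $\beta_*(y_1)=y_1$, $\beta_*(y_2)=-y_2$; $\gamma_*(x_1)=-x_2$,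 $\gamma_*(x_2)=-x_1$, $\gamma_*(y_1)=-y_2$, $\gamma_*(y_2)=-y_1$; $\delta_*(x_1)=-x_1+x_2$, $\delta_*(x_2)=-x_1$, $\delta_*(y_1)=y_2$, $\delta_*(y_2)=-y_1-y_2$. $Z^1(\mathcal{E}_2;H_A)$ is the group of crossed homomorphisms $d:\mathcal{E}_2\to H_A$, i.e. maps with $d(\phi\psi)=d(\phi)+\phi\, d(\psi)$ for all $\phi,\psi\in\mathcal{E}_2$; $d(\alpha)$ etc. denote the values of $d$ on the classes of these generators, and $d(\phi)_i$ the $i$-th coordinate. $H^1(\mathcal{E}_2;H_A)$ is the first twisted group cohomology, equal to $Z^1(\mathcal{E}_2;H_A)$ modulo the principal crossed homomorphisms $\phi\mapsto \phi u-u$, $u\in H_A$. *)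

From HB Require Import structures.
From mathcomp Require Import all_boot all_order all_algebra.
Set Implicit Arguments. Unset Strict Implicit. Unset Printing Implicit Defensive.
Import GRing.Theory.
Local Open Scope ring_scope.

(* The genus-2 Goeritz group E_2 is not available in any library; it enters the
   statement as such a group, generated by four elements alpha, beta, gamma,
   delta, acting on H_A = A^4 with the prescribed action on generators. *)
Record group_str := GroupStr {
  carrier :> Type;
  gmul : carrier -> carrier -> carrier;
  gone : carrier;
  ginv : carrier -> carrier;
  gmulA : forall x y z, gmul x (gmul y z) = gmul (gmul x y) z;
  gmul1g : forall x, gmul gone x = x;
  gmulVg : forall x, gmul (ginv x) x = gone
}.

Inductive generated_by (G : group_str) (S : G -> Prop) : G -> Prop :=
| gen_one : generated_by S (gone G)
| gen_base g : S g -> generated_by S g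
| gen_inv g : generated_by S g -> generated_by S (ginv g)
| gen_mul g h : generated_by S g -> generated_by S h -> generated_by S (gmul g h).

(* H_A = A^4 as column vectors, coordinates w.r.t. x1, x2, y1, y2. *)
Definition HA (A : comNzRingType) := 'cV[A]_4.

(* i-th coordinate (1-based, i = 1..4). *)
Definition crd (A : comNzRingType) (v : HA A) (i : nat) : A := v (@inord 3 i.-1) ord0.

Definition is_action (A : comNzRingType) (G : group_str) (rho : G -> 'M[A]_4) :=
  rho (gone G) = 1%:M /\ forall g h, rho (gmul g h) = rho g *m rho h.

(* Matrices of the actions of the generators (columns = images of x1,x2,y1,y2). *)
Definition mat_alpha (A : comNzRingType) : 'M[A]_4 := - 1%:M.
Definition mat_beta (A : comNzRingType) : 'M[A]_4 :=
  \matrix_(i < 4, j < 4) if i == j then (if odd i then -1 else 1) else 0.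
Definition mat_gamma (A : comNzRingType) : 'M[A]_4 :=
  \matrix_(i < 4, j < 4)
    (* x1 -> -x2, x2 -> -x1, y1 -> -y2, y2 -> -y1 *)
    if ((i : nat), (j : nat)) \in [:: (1,0); (0,1); (3,2); (2,3)]%N then -1 else 0.
Definition mat_delta (A : comNzRingType) : 'M[A]_4 :=
  \matrix_(i < 4, j < 4)
    (* x1 -> -x1 + x2, x2 -> -x1, y1 -> y2, y2 -> -y1 - y2 *)
    if ((i : nat), (j : nat)) \in [:: (0,0); (0,1); (2,3); (3,3)]%N then -1
    else if ((i : nat), (j : nat)) \in [:: (1,0); (3,2)]%N then 1 else 0.

Definition crossed_hom (A : comNzRingType) (G : group_str) (rho : G -> 'M[A]_4)
  (d : G -> HA A) : Prop :=
  forall g h, d (gmul g h) = d g + rho g *m d h.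

Definition principal (A : comNzRingType) (G : group_str) (rho : G -> 'M[A]_4)
  (d : G -> HA A) : Prop :=
  exists u : HA A, forall g, d g = rho g *m u - u.

(* The statement of the lemma for a given coefficient ring A:
   for every group G generated by alpha, beta, gamma, delta acting on H_A as
   prescribed, the subgroup S of Z^1(G;H_A) cut out by the four linear
   conditions maps isomorphically onto H^1(G;H_A) = Z^1/B^1 under the
   natural map, i.e. every class has a representative in S (surjectivity)
   and two elements of S with principal difference coincide (injectivity). *)
Definition lemma2p3_for (A : comNzRingType) : Prop :=
  forall (G : group_str) (rho : G -> 'M[A]_4) (alpha beta gamma delta : G),
    is_action rho ->
    (forall g, generated_by (fun x => x = alpha \/ x = beta \/ x = gamma \/ x = delta) g) ->
    rho alpha = mat_alpha A -> rho beta = mat_beta A ->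
    rho gamma = mat_gamma A -> rho delta = mat_delta A ->
    let S := fun d : G -> HA A =>
      crossed_hom rho d /\
      crd (d delta) 1 - crd (d alpha) 1 = 0 /\
      crd (d gamma) 2 - crd (d beta) 2 = 0 /\
      crd (d gamma) 3 - crd (d alpha) 3 = 0 /\
      crd (d beta) 4 - crd (d delta) 4 = 0 in
    (forall d, crossed_hom rho d ->
       exists d', S d' /\ principal rho (fun g => d g - d' g)) /\
    (forall d1 d2, S d1 -> S d2 -> principal rho (fun g => d1 g - d2 g) ->
       forall g, d1 g = d2 g).

From mathcomp Require Import all_boot all_order all_algebra.
From mathcomp Require Import ring.
(* The four defects of a cocycle d, such as d(delta)_1 - d(alpha)_1, are additive
   in d, and on the coboundary g |-> g u - u they equal
   (-u_2, u_2 - u_1, u_3 - u_4, -u_3), a unimodular change of coordinates of u.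
   Hence every cocycle is cohomologous to exactly one defect-free cocycle. *)

Set Implicit Arguments. Unset Strict Implicit. Unset Printing Implicit Defensive.
Import GRing.Theory.
Local Open Scope ring_scope.

Section Coordinates.
Variable A : comNzRingType.
Implicit Types (u v : HA A) (a b c e : A).

Definition col4 a b c e : HA A := \col_(i < 4) [:: a; b; c; e]`_i.

Lemma crd_col4 a b c e k :
  (0 < k <= 4)%N -> crd (col4 a b c e) k = [:: a; b; c; e]`_k.-1.
Proof. by case/andP=> k_gt0 k_le4; rewrite /crd mxE inordK // prednK. Qed.

Lemma crdB u v k : crd (u - v) k = crd u k - crd v k.
Proof. by rewrite /crd !mxE. Qed.

Lemma crdN u k : crd (- u) k = - crd u k.
Proof. by rewrite /crd !mxE. Qed.

Lemma col4_crd u : u = col4 (crd u 1) (crd u 2) (crd u 3) (crd u 4).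
Proof.
apply/matrixP=> i j; rewrite (ord1 j) /crd !mxE.
by case: i => [[|[|[|[|i]]]] //= ?]; congr (u _ _); apply/val_inj; rewrite /= inordK.
Qed.

Lemma col4B a b c e a' b' c' e' :
  col4 a b c e - col4 a' b' c' e' = col4 (a - a') (b - b') (c - c') (e - e').
Proof. by apply/matrixP=> i j; rewrite !mxE; case: i => [[|[|[|[|i]]]] ?]. Qed.

Lemma col4_eq0 a b c e : col4 a b c e = 0 <-> [/\ a = 0, b = 0, c = 0 & e = 0].
Proof.
split=> [col0 | [-> -> -> ->]].
  have entry0 k : (0 < k <= 4)%N -> [:: a; b; c; e]`_k.-1 = 0.
    by move=> k_in; rewrite -(crd_col4 a b c e k_in) col0 /crd mxE.
  by split; [exact: (entry0 1%N) | exact: (entry0 2%N) | exact: (entry0 3%N) | exact: (entry0 4%N)].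
by apply/matrixP=> i j; rewrite !mxE; case: i => [[|[|[|[|i]]]] ?].
Qed.

Lemma mat_alpha_mul u : mat_alpha A *m u = - u.
Proof. by rewrite /mat_alpha mulNmx mul1mx. Qed.

Lemma mat_beta_mul u :
  mat_beta A *m u = col4 (crd u 1) (- crd u 2) (crd u 3) (- crd u 4).
Proof.
rewrite [in LHS](col4_crd u); apply/matrixP=> i j; rewrite !mxE !big_ord_recl big_ord0 !mxE.
case: i => [[|[|[|[|i]]]] //= ?]; rewrite /bump /=; ring.
Qed.

Lemma mat_gamma_mul u :
  mat_gamma A *m u = col4 (- crd u 2) (- crd u 1) (- crd u 4) (- crd u 3).
Proof.
rewrite [in LHS](col4_crd u); apply/matrixP=> i j; rewrite !mxE !big_ord_recl big_ord0 !mxE.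
case: i => [[|[|[|[|i]]]] //= ?]; rewrite /bump /=; ring.
Qed.

Lemma mat_delta_mul u :
  mat_delta A *m u = col4 (- crd u 1 - crd u 2) (crd u 1) (- crd u 4) (crd u 3 - crd u 4).
Proof.
rewrite [in LHS](col4_crd u); apply/matrixP=> i j; rewrite !mxE !big_ord_recl big_ord0 !mxE.
case: i => [[|[|[|[|i]]]] //= ?]; rewrite /bump /=; ring.
Qed.
End Coordinates.

Section Goeritz.
Variables (A : comNzRingType) (G : group_str) (rho : G -> 'M[A]_4).
Variables alpha beta gamma delta : G.
Hypothesis rhoM : forall g h, rho (gmul g h) = rho g *m rho h.
Hypotheses (rho_alpha : rho alpha = mat_alpha A) (rho_beta : rho beta = mat_beta A).
Hypotheses (rho_gamma : rho gamma = mat_gamma A) (rho_delta : rho delta = mat_delta A).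
Implicit Types (u c : HA A) (d : G -> HA A).

Definition coboundary u g : HA A := rho g *m u - u.

Definition defect d : HA A :=
  col4 (crd (d delta) 1 - crd (d alpha) 1) (crd (d gamma) 2 - crd (d beta) 2)
       (crd (d gamma) 3 - crd (d alpha) 3) (crd (d beta) 4 - crd (d delta) 4).

Lemma crossed_hom_coboundary u : crossed_hom rho (coboundary u).
Proof. by move=> g h; rewrite /coboundary rhoM mulmxBr mulmxA [RHS]addrC addrA subrK. Qed.

Lemma crossed_homB d1 d2 :
  crossed_hom rho d1 -> crossed_hom rho d2 -> crossed_hom rho (fun g => d1 g - d2 g).
Proof. by move=> cd1 cd2 g h; rewrite cd1 cd2 mulmxBr opprD addrACA. Qed.

Lemma eq_defect d1 d2 : d1 =1 d2 -> defect d1 = defect d2.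
Proof. by move=> d12; rewrite /defect !d12. Qed.

Lemma defect_eq0 d :
  defect d = 0 <->
  [/\ crd (d delta) 1 - crd (d alpha) 1 = 0, crd (d gamma) 2 - crd (d beta) 2 = 0,
      crd (d gamma) 3 - crd (d alpha) 3 = 0 & crd (d beta) 4 - crd (d delta) 4 = 0].
Proof. exact: col4_eq0. Qed.

Lemma defectB d1 d2 : defect (fun g => d1 g - d2 g) = defect d1 - defect d2.
Proof. by rewrite /defect col4B !crdB; congr col4; ring. Qed.

Lemma defect_coboundary u :
  defect (coboundary u) =
  col4 (- crd u 2) (crd u 2 - crd u 1) (crd u 3 - crd u 4) (- crd u 3).
Proof.
rewrite /defect /coboundary rho_alpha rho_beta rho_gamma rho_delta.
rewrite mat_alpha_mul mat_beta_mul mat_gamma_mul mat_delta_mul !crdB !crd_col4 //= !crdN.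
by congr col4; ring.
Qed.

Definition defect_lift c : HA A :=
  col4 (- crd c 1 - crd c 2) (- crd c 1) (- crd c 4) (- crd c 4 - crd c 3).

Lemma defect_coboundary_lift c : defect (coboundary (defect_lift c)) = c.
Proof.
by rewrite defect_coboundary !crd_col4 //= [RHS]col4_crd; congr col4; ring.
Qed.

Lemma defect_coboundary_eq0 u : defect (coboundary u) = 0 -> u = 0.
Proof.
rewrite defect_coboundary col4_eq0 => -[/eqP u2 /eqP u12 /eqP u34 /eqP u3].
move: u2 u3; rewrite !oppr_eq0 => /eqP u2 /eqP u3.
move: u12 u34; rewrite u2 u3 !sub0r !oppr_eq0 => /eqP u1 /eqP u4.
by rewrite [u]col4_crd u1 u2 u3 u4; apply/col4_eq0.
Qed.

Lemma cohomologous_defect_free d :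
  crossed_hom rho d ->
  exists d', (crossed_hom rho d' /\ defect d' = 0) /\ principal rho (fun g => d g - d' g).
Proof.
move=> cd; pose u := defect_lift (defect d).
exists (fun g => d g - coboundary u g); split; last by exists u => g; rewrite opprB addrC subrK.
split; first exact/crossed_homB/crossed_hom_coboundary.
by rewrite defectB defect_coboundary_lift subrr.
Qed.

Lemma defect_free_cohomologous_eq d1 d2 :
  defect d1 = 0 -> defect d2 = 0 -> principal rho (fun g => d1 g - d2 g) ->
  forall g, d1 g = d2 g.
Proof.
move=> d1_0 d2_0 [u d12E] g; apply/eqP; rewrite -subr_eq0 d12E.
have : defect (coboundary u) = 0.
  by rewrite -(eq_defect d12E) defectB d1_0 d2_0 subrr.
by move/defect_coboundary_eq0 => ->; rewrite mulmx0 subrr.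
Qed.
End Goeritz.

Lemma goeritz_H1_defect_free (A : comNzRingType) : lemma2p3_for A.
Proof.
move=> G rho alpha beta gamma delta [_ rhoM] _ rho_a rho_b rho_g rho_d /=.
split=> [d cd | d1 d2 [_ [? [? [? ?]]]] [_ [? [? [? ?]]]]].
- have [d' [[cd' /defect_eq0 [? ? ? ?]] pd]] :=
    cohomologous_defect_free rhoM rho_a rho_b rho_g rho_d cd.
  by exists d'.
- by apply: (defect_free_cohomologous_eq rho_a rho_b rho_g rho_d); apply/defect_eq0.
Qed.

Theorem lemma2p3 :
  lemma2p3_for int /\ (forall n : nat, (1 < n)%N -> lemma2p3_for 'Z_n).
Proof. by split=> [|n _]; apply: goeritz_H1_defect_free. Qed.
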